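(* Let $\mathbf{k}$ be a field, $Q$ a finite connected quiver, $\Lambda=\mathbf{k}Q/\mathcal{J}^2$ ($\mathcal{J}$ the arrow ideal), $n\ge2$, and assume $\mathcal{C}\subseteq\operatorname{mod}\Lambda$ is an $n$-cluster tilting subcategory. Then for all vertices $v,u\in Q_0$ there is at most one arrow $\alpha\in Q_1$ with $s(\alpha)=v$ and $t(\alpha)=u$.
   Context: Modules are finite-dimensional right modules; $s,t$ are the source and target maps of $Q$. $\mathcal{C}$ is $n$-cluster tilting if it is functorially finite and $\mathcal{C}=\{X\mid \operatorname{Ext}^i(X,\mathcal{C})=0\ \forall 0<i<n\}=\{X\mid\operatorname{Ext}^i(\mathcal{C},X)=0\ \forall 0<i<n\}$. *)

From HB Require Import structures.
From mathcomp Require Import all_boot all_order all_algebra.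
Set Implicit Arguments. Unset Strict Implicit. Unset Printing Implicit Defensive.
Import GRing.Theory.
Local Open Scope ring_scope.

(* Paths are composed left to right: alpha * beta <> 0 in kQ iff t alpha = s beta.
   A finite-dimensional right module over Lambda = kQ/J^2 is a space k^N of
   row vectors (m . x  is  m *m X) together with matrices E_v (vertex
   idempotents) and A_a (arrows) satisfying the defining relations of the
   presentation of kQ/J^2:
     e_v e_v = e_v, e_v e_w = 0 (v <> w), sum_v e_v = 1,
     e_(s a) a = a = a e_(t a),  a b = 0 for all arrows a, b. *)

Section Modules.
Variables (k : fieldType) (Q0 Q1 : finType) (s t : Q1 -> Q0).

Record rmod := RMod {
  rdim : nat;
  ridem : Q0 -> 'M[k]_rdim;
  rarr : Q1 -> 'M[k]_rdim;
  ridem_idem : forall v, ridem v *m ridem v = ridem v;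
  ridem_orth : forall v w, v != w -> ridem v *m ridem w = 0;
  ridem_sum : \sum_v ridem v = 1%:M;
  rarr_src : forall a, ridem (s a) *m rarr a = rarr a;
  rarr_tgt : forall a, rarr a *m ridem (t a) = rarr a;
  rarr_rad2 : forall a b, rarr a *m rarr b = 0
}.

Definition hom (M N : rmod) (f : 'M[k]_(rdim M, rdim N)) : Prop :=
  (forall v, ridem M v *m f = f *m ridem N v) /\
  (forall a, rarr M a *m f = f *m rarr N a).

Definition ses (Y E X : rmod) (f : 'M[k]_(rdim Y, rdim E))
    (g : 'M[k]_(rdim E, rdim X)) : Prop :=
  [/\ hom f, hom g, row_free f, row_full g &
      f *m g = 0 /\ (\rank f + \rank g)%N = rdim E].

Definition ext1_zero (X Y : rmod) : Prop :=
  forall (E : rmod) f g, @ses Y E X f g ->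
    exists h : 'M[k]_(rdim X, rdim E), hom h /\ h *m g = 1%:M.

Definition projective (P : rmod) : Prop :=
  forall (M N : rmod) (g : 'M[k]_(rdim M, rdim N)) (h : 'M[k]_(rdim P, rdim N)),
    hom g -> row_full g -> hom h ->
    exists l : 'M[k]_(rdim P, rdim M), hom l /\ l *m g = h.

Fixpoint syz (m : nat) (X Z : rmod) : Prop :=
  match m with
  | 0 => Z = X
  | m'.+1 => exists (W P : rmod) f g, syz m' X W /\ projective P /\ @ses Z P W f g
  end.

(* Ext^i(X, Y) = 0 (i >= 1), by dimension shifting:
   Ext^i(X,Y) = Ext^1(Omega^(i-1) X, Y), for any choice of syzygy. *)
Definition ext_zero (i : nat) (X Y : rmod) : Prop :=
  forall Z, syz i.-1 X Z -> ext1_zero Z Y.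

Definition contravariantly_finite (C : rmod -> Prop) : Prop :=
  forall X : rmod, exists (CX : rmod) (f : 'M[k]_(rdim CX, rdim X)),
    [/\ C CX, hom f &
      forall (C' : rmod) (g : 'M[k]_(rdim C', rdim X)), C C' -> hom g ->
        exists h : 'M[k]_(rdim C', rdim CX), hom h /\ h *m f = g].

Definition covariantly_finite (C : rmod -> Prop) : Prop :=
  forall X : rmod, exists (XC : rmod) (f : 'M[k]_(rdim X, rdim XC)),
    [/\ C XC, hom f &
      forall (C' : rmod) (g : 'M[k]_(rdim X, rdim C')), C C' -> hom g ->
        exists h : 'M[k]_(rdim XC, rdim C'), hom h /\ f *m h = g].

Definition functorially_finite (C : rmod -> Prop) : Prop :=
  contravariantly_finite C /\ covariantly_finite C.

Definition n_cluster_tilting (n : nat) (C : rmod -> Prop) : Prop :=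
  [/\ functorially_finite C,
      (forall X, C X <-> (forall Y, C Y -> forall i, (0 < i < n)%N -> ext_zero i X Y)) &
      (forall X, C X <-> (forall Y, C Y -> forall i, (0 < i < n)%N -> ext_zero i Y X))].

End Modules.

Arguments rmod k {Q0 Q1} s t.

Definition quiver_connected (Q0 Q1 : finType) (s t : Q1 -> Q0) : Prop :=
  forall x y : Q0,
    connect [rel u w | [exists a, ((s a == u) && (t a == w)) || ((s a == w) && (t a == u))]] x y.

(* Lambda_Lambda is projective and D(Lambda) is injective, so both lie in every
   n-cluster tilting subcategory; for n >= 2 this forces Ext^1(D Lambda, Lambda) = 0.
   Extensions of D Lambda by Lambda are described by cocycles, and an arrow a gives
   the cocycle with a^*.a = e_(t a)^* + a.  A splitting is a linear map
   h : D Lambda -> Lambda with c h - h c equal to the cocycle at every arrow c.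
   If b <> a is parallel to a, the equations for b force the image of e_(t a)^*
   under h to have no a-coordinate and the image of a^* to have no
   e_(s a)-coordinate, and then the equation for a reads 0 = 1. *)

From Pilot Require Import Defs.
From mathcomp Require Import all_boot all_order all_algebra.
Set Implicit Arguments. Unset Strict Implicit. Unset Printing Implicit Defensive.
Import GRing.Theory.
Local Open Scope ring_scope.

Lemma col_mul (R : pzSemiRingType) m n p (A : 'M[R]_(m, n)) (B : 'M_(n, p)) j :
  col j (A *m B) = A *m col j B.
Proof. by rewrite !colE mulmxA. Qed.

Section Modules.
Variables (k : fieldType) (Q0 Q1 : finType) (s t : Q1 -> Q0).
Local Notation mod := (rmod k s t).
Local Notation Hom M N f := (@Defs.hom k Q0 Q1 s t M N f).

Lemma hom1 (M : mod) : Hom M M 1%:M.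
Proof. by split=> ?; rewrite mul1mx mulmx1. Qed.

Lemma homM (M N P : mod) f g : Hom M N f -> Hom N P g -> Hom M P (f *m g).
Proof.
by case=> f1 f2 [g1 g2]; split=> x; rewrite mulmxA ?f1 ?f2 -!mulmxA ?g1 ?g2.
Qed.

Lemma homB (M N : mod) f g : Hom M N f -> Hom M N g -> Hom M N (f - g).
Proof.
by case=> f1 f2 [g1 g2]; split=> x; rewrite mulmxBr mulmxBl ?f1 ?f2 ?g1 ?g2.
Qed.

Lemma hom_free_cancel (M N P : mod) r f :
  Hom N P f -> row_free f -> Hom M P (r *m f) -> Hom M N r.
Proof.
case=> f1 f2 ff [rf1 rf2]; split=> x; apply: (row_free_inj ff).
  by rewrite /= -mulmxA rf1 -mulmxA -f1 mulmxA.
by rewrite /= -mulmxA rf2 -mulmxA -f2 mulmxA.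
Qed.

Lemma hom_full_cancel (M N P : mod) g h :
  Hom M N g -> row_full g -> Hom M P (g *m h) -> Hom N P h.
Proof.
case=> g1 g2 gf [gh1 gh2]; split=> x; apply: (row_full_inj gf).
  by rewrite mulmxA -g1 -mulmxA gh1 mulmxA.
by rewrite mulmxA -g2 -mulmxA gh2 mulmxA.
Qed.

Section ShortExactSequence.
Variables (Y E X : mod) (f : 'M[k]_(rdim Y, rdim E)) (g : 'M[k]_(rdim E, rdim X)).
Hypothesis fg : ses f g.

Lemma ses_sub_ker m (W : 'M_(m, rdim E)) : (W <= f)%MS = (W *m g == 0).
Proof.
case: fg => _ _ _ _ [fg0 rk_fg].
have f_ker : (f <= kermx g)%MS by apply/sub_kermxP.
have ker_f : (kermx g <= f)%MS.
  by rewrite -(mxrank_leqif_sup f_ker).2 mxrank_ker -[X in (X - _)%N]rk_fg addnK.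
apply/idP/eqP => [/submxP[D ->]|/sub_kermxP W_ker]; first by rewrite -mulmxA fg0 mulmx0.
exact: submx_trans W_ker ker_f.
Qed.

Lemma ses_retraction sc : Hom X E sc -> sc *m g = 1%:M ->
  exists r, Hom E Y r /\ f *m r = 1%:M.
Proof.
move=> hsc scg; case: fg => hf hg ff _ [fg0 _].
set q := 1%:M - g *m sc.
have q_f : (q <= f)%MS.
  by rewrite ses_sub_ker mulmxBl mul1mx -mulmxA scg mulmx1 subrr.
have hq : Hom E E q by apply: homB; [exact: hom1 | exact: homM].
have qf : q *m pinvmx f *m f = q by exact: mulmxKpV.
exists (q *m pinvmx f); split; first by apply: hom_free_cancel hf ff _; rewrite qf.
apply: (row_free_inj ff); rewrite /= -mulmxA qf mul1mx /q.
by rewrite mulmxBr mulmx1 mulmxA fg0 mul0mx subr0.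
Qed.

Lemma ses_section r : Hom E Y r -> f *m r = 1%:M ->
  exists sc, Hom X E sc /\ sc *m g = 1%:M.
Proof.
move=> hr fr; case: fg => hf hg _ gf [fg0 _].
have [G Gg] := row_fullP gf.
set q := 1%:M - r *m f.
have hq : Hom E E q by apply: homB; [exact: hom1 | exact: homM].
have fq : f *m q = 0 by rewrite mulmxBr mulmx1 mulmxA fr mul1mx subrr.
have gGq : g *m (G *m q) = q.
  have /submxP[D gG] : (g *m G - 1%:M <= f)%MS.
    by rewrite ses_sub_ker mulmxBl -mulmxA Gg mulmx1 mul1mx subrr.
  by rewrite mulmxA -[g *m G](subrK 1%:M) gG mulmxDl -mulmxA fq mulmx0 mul1mx add0r.
exists (G *m q); split; first by apply: hom_full_cancel hg gf _; rewrite gGq.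
by rewrite -mulmxA mulmxBl mul1mx -mulmxA fg0 mulmx0 subr0 Gg.
Qed.

End ShortExactSequence.

Definition injective_rmod (I : mod) : Prop :=
  forall (E : mod) (f : 'M[k]_(rdim I, rdim E)), Hom I E f -> row_free f ->
    exists r : 'M[k]_(rdim E, rdim I), Hom E I r /\ f *m r = 1%:M.

Lemma projective_retract (Z P : mod) i r :
  projective P -> Hom Z P i -> Hom P Z r -> i *m r = 1%:M -> projective Z.
Proof.
move=> pP hi hr ir M N g h hg gf hh.
have [l [hl lg]] := pP _ _ g (r *m h) hg gf (homM hr hh).
exists (i *m l); split; first exact: homM hi hl.
by rewrite -mulmxA lg mulmxA ir mul1mx.
Qed.

Lemma projective_ses_ker (Z P W : mod)
    (f : 'M[k]_(rdim Z, rdim P)) (g : 'M[k]_(rdim P, rdim W)) :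
  projective P -> projective W -> ses f g -> projective Z.
Proof.
move=> pP pW fg; have [hf hg _ gf _] := fg.
have [sc [hsc scg]] := pW _ _ g 1%:M hg gf (hom1 W).
have [r [hr fr]] := ses_retraction fg hsc scg.
exact: projective_retract pP hf hr fr.
Qed.

Lemma syz_projective m (X Z : mod) : projective X -> syz m X Z -> projective Z.
Proof.
move=> pX; elim: m Z => [|m IHm] Z /=; first by move->.
by case=> W [P [f [g [sW [pP fg]]]]]; apply: projective_ses_ker pP (IHm _ sW) fg.
Qed.

Lemma projective_ext_zero i (P Y : mod) : projective P -> ext_zero i P Y.
Proof.
move=> pP Z sZ E f g [_ hg _ gf _].
exact: (syz_projective pP sZ) _ _ g 1%:M hg gf (hom1 Z).
Qed.

Lemma injective_ext_zero i (Z I : mod) : injective_rmod I -> ext_zero i Z I.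
Proof.
move=> iI Z' _ E f g fg; have [hf _ ff _ _] := fg.
have [r [hr fr]] := iI _ f hf ff.
by have [sc [hsc scg]] := ses_section fg hr fr; exists sc.
Qed.

Lemma cluster_tilting_ext1_zero n (C : mod -> Prop) (P I : mod) :
  (2 <= n)%N -> n_cluster_tilting n C -> projective P -> injective_rmod I ->
  ext1_zero I P.
Proof.
move=> n2 [_ C_ext_r C_ext_l] pP iI.
have CP : C P by apply/C_ext_r => Y _ i _; exact: projective_ext_zero.
have CI : C I by apply/C_ext_l => Y _ i _; exact: injective_ext_zero.
exact: (C_ext_r I).1 CI P CP 1%N n2 I erefl.
Qed.

End Modules.

Section MatrixUnitModule.
Variables (k : fieldType) (Q0 Q1 : finType) (s t : Q1 -> Q0).
Variables (B : finType) (lab : B -> Q0) (src tgt : Q1 -> B).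
Hypotheses (lab_src : forall c, lab (src c) = s c) (lab_tgt : forall c, lab (tgt c) = t c).
Hypothesis tgt_neq_src : forall c d, tgt c != src d.
Local Notation ix := (@enum_rank B).
Local Notation ev := (@enum_val B predT).

Definition unit_idem w : 'M[k]_#|B| := \matrix_(i, j) ((i == j) && (lab (ev i) == w))%:R.
Definition unit_arr c : 'M[k]_#|B| := delta_mx (ix (src c)) (ix (tgt c)).

Lemma unit_idem_mulE n (X : 'M_(#|B|, n)) w i j :
  (unit_idem w *m X) i j = (lab (ev i) == w)%:R * X i j.
Proof.
rewrite !mxE (bigD1 i) //= big1 ?addr0 ?mxE ?eqxx // => m /negbTE im.
by rewrite mxE eq_sym im mul0r.
Qed.

Lemma mul_unit_idemE n (X : 'M_(n, #|B|)) w i j :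
  (X *m unit_idem w) i j = X i j * (lab (ev j) == w)%:R.
Proof.
rewrite !mxE (bigD1 j) //= big1 ?addr0 ?mxE ?eqxx // => m /negbTE mj.
by rewrite mxE mj mulr0.
Qed.

Lemma unit_arr_mulE n (X : 'M_(#|B|, n)) c i j :
  (unit_arr c *m X) i j = (i == ix (src c))%:R * X (ix (tgt c)) j.
Proof.
rewrite !mxE (bigD1 (ix (tgt c))) //= big1 ?addr0 ?mxE ?eqxx ?andbT // => m /negbTE mt.
by rewrite mxE mt andbF mul0r.
Qed.

Lemma mul_unit_arrE n (X : 'M_(n, #|B|)) c i j :
  (X *m unit_arr c) i j = X i (ix (src c)) * (j == ix (tgt c))%:R.
Proof.
rewrite !mxE (bigD1 (ix (src c))) //= big1 ?addr0 ?mxE ?eqxx // => m /negbTE ms.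
by rewrite mxE ms mulr0.
Qed.

Lemma row_unit_idem_mul n (X : 'M_(#|B|, n)) w i :
  row i (unit_idem w *m X) = (lab (ev i) == w)%:R *: row i X.
Proof. by apply/rowP => j; rewrite [LHS]mxE unit_idem_mulE !mxE. Qed.

Lemma row_unit_arr_mul n (X : 'M_(#|B|, n)) c i :
  row i (unit_arr c *m X) = (i == ix (src c))%:R *: row (ix (tgt c)) X.
Proof. by apply/rowP => j; rewrite [LHS]mxE unit_arr_mulE !mxE. Qed.

Lemma col_mul_unit_idem n (X : 'M_(n, #|B|)) w j :
  col j (X *m unit_idem w) = (lab (ev j) == w)%:R *: col j X.
Proof. by apply/colP => i; rewrite [LHS]mxE mul_unit_idemE !mxE mulrC. Qed.

Lemma col_mul_unit_arr n (X : 'M_(n, #|B|)) c j :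
  col j (X *m unit_arr c) = (j == ix (tgt c))%:R *: col (ix (src c)) X.
Proof. by apply/colP => i; rewrite [LHS]mxE mul_unit_arrE !mxE mulrC. Qed.

Lemma unit_idem_idem w : unit_idem w *m unit_idem w = unit_idem w.
Proof.
apply/matrixP => i j; rewrite unit_idem_mulE mxE.
by case: (lab _ == w); rewrite ?andbT ?andbF ?mul1r ?mul0r.
Qed.

Lemma unit_idem_orth v w : v != w -> unit_idem v *m unit_idem w = 0.
Proof.
move=> vw; apply/matrixP => i j; rewrite unit_idem_mulE !mxE.
by case: eqP => [->|_]; rewrite ?(negbTE vw) ?andbF ?mulr0 ?mul0r.
Qed.

Lemma unit_idem_sum : \sum_v unit_idem v = 1%:M.
Proof.
apply/matrixP => i j; rewrite summxE (bigD1 (lab (ev i))) //= big1 => [|v /negbTE nv].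
  by rewrite !mxE eqxx andbT addr0.
by rewrite mxE [lab _ == _]eq_sym nv andbF.
Qed.

Lemma unit_arr_src c : unit_idem (s c) *m unit_arr c = unit_arr c.
Proof.
apply/matrixP => i j; rewrite unit_idem_mulE mxE.
by case: (eqVneq i) => [->|_]; rewrite ?enum_rankK ?lab_src ?eqxx ?mul1r ?mulr0.
Qed.

Lemma unit_arr_tgt c : unit_arr c *m unit_idem (t c) = unit_arr c.
Proof.
apply/matrixP => i j; rewrite mul_unit_idemE mxE.
by case: (eqVneq j) => [->|_]; rewrite ?enum_rankK ?lab_tgt ?eqxx ?mulr1 ?andbF ?mul0r.
Qed.

Lemma unit_arr_rad2 c d : unit_arr c *m unit_arr d = 0.
Proof. by apply: mul_delta_mx_0; rewrite (inj_eq enum_rank_inj). Qed.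

Definition unit_rmod : rmod k s t := RMod unit_idem_idem unit_idem_orth unit_idem_sum
  unit_arr_src unit_arr_tgt unit_arr_rad2.

End MatrixUnitModule.

Section RadicalSquareZero.
Variables (k : fieldType) (Q0 Q1 : finType) (s t : Q1 -> Q0).
Local Notation mod := (rmod k s t).
Local Notation Hom M N f := (@Defs.hom k Q0 Q1 s t M N f).
(* Q0 + Q1 indexes the basis {e_v} u Q1 of Lambda.  In reg_rmod = Lambda_Lambda
   we have e_(s c).c = c, and in dual_rmod = D(Lambda), written in the dual
   basis, c^*.c = e_(t c)^*. *)
Local Notation paths := ((Q0 + Q1)%type : finType).
Local Notation ix := (@enum_rank paths).
Local Notation ev := (@enum_val paths predT).

Lemma eq_ix i x : (i == ix x) = (ev i == x).
Proof. by rewrite (can2_eq enum_valK enum_rankK). Qed.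

Definition psrc (x : paths) : Q0 := match x with inl v => v | inr c => s c end.
Definition ptgt (x : paths) : Q0 := match x with inl v => v | inr c => t c end.

Definition pact (M : mod) (x : paths) : 'M[k]_(rdim M) :=
  match x with inl v => ridem M v | inr c => rarr M c end.

Lemma ridem_mul (M : mod) v w : ridem M v *m ridem M w = (v == w)%:R *: ridem M w.
Proof.
by case: eqVneq => [->|/ridem_orth->]; rewrite ?ridem_idem ?scale1r ?scale0r.
Qed.

Lemma ridem_pact (M : mod) w x : ridem M w *m pact M x = (psrc x == w)%:R *: pact M x.
Proof.
case: x => [v|c] /=; first by rewrite ridem_mul eq_sym.
by rewrite -{1}rarr_src mulmxA ridem_mul -scalemxAl rarr_src eq_sym.
Qed.

Lemma pact_ridem (M : mod) x w : pact M x *m ridem M w = (ptgt x == w)%:R *: pact M x.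
Proof.
case: x => [v|c] /=; first by rewrite ridem_mul; case: eqVneq => [->|_]; rewrite ?scale0r.
rewrite -{1}rarr_tgt -mulmxA ridem_mul -scalemxAr.
by case: (eqVneq (t c) w) => [<-|_]; rewrite ?rarr_tgt ?scale0r.
Qed.

Lemma rarr_pact (M : mod) c x : rarr M c *m pact M x = (x == inl (t c))%:R *: rarr M c.
Proof.
case: x => [v|d] /=; last by rewrite rarr_rad2 scale0r.
by rewrite (pact_ridem M (inr c)) /= eq_sym.
Qed.

Lemma pact_rarr (M : mod) x c : pact M x *m rarr M c = (x == inl (s c))%:R *: rarr M c.
Proof.
case: x => [v|d] /=; last by rewrite rarr_rad2 scale0r.
by rewrite (ridem_pact M v (inr c)) /= eq_sym.
Qed.

Lemma hom_pact (M N : mod) g x : Hom M N g -> pact M x *m g = g *m pact N x.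
Proof. by case=> g1 g2; case: x. Qed.

Definition reg_rmod : mod :=
  @unit_rmod k _ _ s t _ ptgt (fun c => inl (s c)) inr (fun c => erefl) (fun c => erefl)
    (fun c d => isT).

Definition dual_rmod : mod :=
  @unit_rmod k _ _ s t _ psrc inr (fun c => inl (t c)) (fun c => erefl) (fun c => erefl)
    (fun c d => isT).

Lemma row_ixP n (A B : 'M[k]_(#|paths|, n)) :
  (forall x, row (ix x) A = row (ix x) B) -> A = B.
Proof. by move=> eqAB; apply/row_matrixP => i; rewrite -[i]enum_valK eqAB. Qed.

Lemma col_ixP n (A B : 'M[k]_(n, #|paths|)) :
  (forall x, col (ix x) A = col (ix x) B) -> A = B.
Proof.
move=> eqAB; apply/matrixP => i j.
by have /colP/(_ i) := eqAB (ev j); rewrite !mxE enum_valK.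
Qed.

Definition from_reg (M : mod) (m : Q0 -> 'rV[k]_(rdim M)) :
    'M[k]_(rdim reg_rmod, rdim M) :=
  \matrix_i (m (psrc (ev i)) *m pact M (ev i)).

Lemma row_from_reg (M : mod) m x : row (ix x) (from_reg m) = m (psrc x) *m pact M x.
Proof. by rewrite rowK enum_rankK. Qed.

Lemma from_reg_hom (M : mod) m : Hom reg_rmod M (from_reg m).
Proof.
split=> [v|c]; apply: row_ixP => x.
  rewrite row_unit_idem_mul enum_rankK row_mul !row_from_reg -mulmxA pact_ridem.
  by rewrite scalemxAr.
rewrite row_unit_arr_mul eq_ix enum_rankK row_mul !row_from_reg -mulmxA pact_rarr.
rewrite -!scalemxAr /=.
by case: eqP => [->|_]; rewrite ?scale0r.
Qed.

Lemma from_reg_mul (M N : mod) m g :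
  Hom M N g -> from_reg m *m g = from_reg (fun v => m v *m g).
Proof.
move=> hg; apply: row_ixP => x.
by rewrite row_mul !row_from_reg -!mulmxA (hom_pact _ hg).
Qed.

Lemma from_regE (M : mod) h :
  Hom reg_rmod M h -> from_reg (fun v => row (ix (inl v)) h) = h.
Proof.
case=> h1 h2; apply: row_ixP => x; rewrite row_from_reg.
case: x => [v|c] /=; rewrite -row_mul.
  by rewrite -h1 row_unit_idem_mul enum_rankK /= eqxx scale1r.
by rewrite -h2 row_unit_arr_mul eqxx scale1r.
Qed.

Lemma reg_projective : projective reg_rmod.
Proof.
move=> M N g h hg /row_fullP[G Gg] hh.
exists (from_reg (fun v => row (ix (inl v)) h *m G)); split; first exact: from_reg_hom.
rewrite (from_reg_mul _ hg) -[RHS](from_regE hh); apply: row_ixP => x.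
by rewrite !row_from_reg -[_ *m G *m g]mulmxA Gg mulmx1.
Qed.

(* Hom(E, D Lambda) = D(E): to_dual phi is x |-> (lambda |-> phi (x.lambda)), and
   dual_counit, evaluation at 1, reads off the e_v^* coordinates. *)
Definition to_dual (E : mod) (phi : 'cV[k]_(rdim E)) :
    'M[k]_(rdim E, rdim dual_rmod) :=
  \matrix_(i, j) (pact E (ev j) *m phi) i 0.

Lemma col_to_dual (E : mod) phi x : col (ix x) (to_dual phi) = pact E x *m phi.
Proof. by apply/colP => i; rewrite !mxE enum_rankK. Qed.

Lemma to_dual_hom (E : mod) phi : Hom E dual_rmod (to_dual phi).
Proof.
split=> [v|c]; apply: col_ixP => x; rewrite col_mul col_to_dual mulmxA.
  by rewrite col_mul_unit_idem enum_rankK col_to_dual ridem_pact scalemxAl.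
by rewrite col_mul_unit_arr eq_ix enum_rankK col_to_dual rarr_pact scalemxAl.
Qed.

Lemma mul_to_dual (E' E : mod) f phi :
  Hom E' E f -> f *m to_dual phi = to_dual (f *m phi).
Proof.
move=> hf; apply: col_ixP => x.
by rewrite col_mul !col_to_dual !mulmxA (hom_pact _ hf).
Qed.

Definition dual_counit : 'cV[k]_(rdim dual_rmod) := \col_i (if ev i is inl _ then 1 else 0).

Lemma to_dual_counit : to_dual dual_counit = 1%:M.
Proof.
apply: col_ixP => x; rewrite col_to_dual col1; apply/colP => i.
rewrite [RHS]mxE eq_ix andbT; case: x => [v|c] /=.
  rewrite unit_idem_mulE mxE.
  by case: (ev i) => [w|d] /=; rewrite ?mulr1 ?mulr0.
by rewrite unit_arr_mulE mxE enum_rankK mulr1 eq_ix.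
Qed.

Lemma dual_injective : injective_rmod dual_rmod.
Proof.
move=> E f hf /row_freeP[F fF].
exists (to_dual (F *m dual_counit)); split; first exact: to_dual_hom.
by rewrite (mul_to_dual _ hf) mulmxA fF mul1mx to_dual_counit.
Qed.

End RadicalSquareZero.

Section Extension.
Variables (k : fieldType) (Q0 Q1 : finType) (s t : Q1 -> Q0).
Local Notation mod := (rmod k s t).
Variables (Y X : mod) (phi : Q1 -> 'M[k]_(rdim X, rdim Y)).
Hypotheses (phi_src : forall c, ridem X (s c) *m phi c = phi c)
  (phi_tgt : forall c, phi c *m ridem Y (t c) = phi c).
Hypotheses (phi_rarr : forall c d, phi c *m rarr Y d = 0)
  (rarr_phi : forall c d, rarr X c *m phi d = 0).

Definition ext_idem v : 'M[k]_(rdim Y + rdim X) := block_mx (ridem Y v) 0 0 (ridem X v).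
Definition ext_arr c : 'M[k]_(rdim Y + rdim X) := block_mx (rarr Y c) 0 (phi c) (rarr X c).

Lemma ext_idem_idem v : ext_idem v *m ext_idem v = ext_idem v.
Proof. by rewrite mulmx_block !mulmx0 !mul0mx !addr0 !add0r !ridem_idem. Qed.

Lemma ext_idem_orth v w : v != w -> ext_idem v *m ext_idem w = 0.
Proof.
move=> vw; rewrite mulmx_block !mulmx0 !mul0mx !addr0 !add0r !ridem_orth //.
by rewrite block_mx0.
Qed.

Lemma ext_idem_sum : \sum_v ext_idem v = 1%:M.
Proof.
have sum_block (r : seq Q0) : \sum_(v <- r) ext_idem v =
    block_mx (\sum_(v <- r) ridem Y v) 0 0 (\sum_(v <- r) ridem X v).
  elim: r => [|v r IHr]; first by rewrite !big_nil block_mx0.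
  by rewrite !big_cons IHr add_block_mx !addr0.
by rewrite sum_block !ridem_sum -scalar_mx_block.
Qed.

Lemma ext_arr_src c : ext_idem (s c) *m ext_arr c = ext_arr c.
Proof. by rewrite mulmx_block !mulmx0 !mul0mx !addr0 !add0r !rarr_src phi_src. Qed.

Lemma ext_arr_tgt c : ext_arr c *m ext_idem (t c) = ext_arr c.
Proof. by rewrite mulmx_block !mulmx0 !mul0mx !addr0 !add0r !rarr_tgt phi_tgt. Qed.

Lemma ext_arr_rad2 c d : ext_arr c *m ext_arr d = 0.
Proof.
by rewrite mulmx_block !rarr_rad2 phi_rarr rarr_phi !mulmx0 !mul0mx !addr0 block_mx0.
Qed.

Definition ext_rmod : mod :=
  RMod ext_idem_idem ext_idem_orth ext_idem_sum ext_arr_src ext_arr_tgt ext_arr_rad2.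

Definition ext_incl : 'M[k]_(rdim Y, rdim ext_rmod) := row_mx 1%:M 0.
Definition ext_proj : 'M[k]_(rdim ext_rmod, rdim X) := col_mx 0 1%:M.

Lemma ext_ses : ses ext_incl ext_proj.
Proof.
have incl_free : row_free ext_incl.
  by apply/row_freeP; exists (col_mx 1%:M 0); rewrite mul_row_col mulmx1 mulmx0 addr0.
have proj_full : row_full ext_proj.
  by apply/row_fullP; exists (row_mx 0 1%:M); rewrite mul_row_col mulmx1 mulmx0 add0r.
split=> //.
- by split=> x /=; rewrite /ext_incl mul_mx_row mul_row_block !mulmx0 !mul0mx
    !mulmx1 !mul1mx !addr0.
- by split=> x /=; rewrite /ext_proj mul_block_col mul_col_mx !mulmx0 !mul0mx
    !mulmx1 !mul1mx ?addr0 ?add0r.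
split; first by rewrite mul_row_col mulmx0 mul0mx addr0.
by move: incl_free proj_full => /eqP-> /eqP->.
Qed.

Lemma ext1_zero_coboundary : ext1_zero X Y ->
  exists h : 'M[k]_(rdim X, rdim Y), forall c, rarr X c *m h = h *m rarr Y c + phi c.
Proof.
move=> ext0; have [h [[_ h_arr] hp]] := ext0 _ _ _ ext_ses.
have h_r : rsubmx h = 1%:M.
  by move: hp; rewrite -[h]hsubmxK /ext_proj mul_row_col mulmx0 add0r mulmx1 row_mxKr.
exists (lsubmx h) => c; move: (h_arr c).
rewrite -[h]hsubmxK /= /ext_arr mul_mx_row mul_row_block h_r mul1mx.
by rewrite row_mxKl => /eq_row_mx[].
Qed.

End Extension.

Section ParallelArrows.
Variables (k : fieldType) (Q0 Q1 : finType) (s t : Q1 -> Q0).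
Local Notation paths := ((Q0 + Q1)%type : finType).
Local Notation ix := (@enum_rank paths).
Local Notation reg := (@reg_rmod k Q0 Q1 s t).
Local Notation dual := (@dual_rmod k Q0 Q1 s t).
Variable a : Q1.

Definition arrow_cocycle c : 'M[k]_(rdim dual, rdim reg) :=
  if c == a then delta_mx (ix (inr a)) (ix (inr a)) else 0.

Lemma arrow_cocycle_src c : ridem dual (s c) *m arrow_cocycle c = arrow_cocycle c.
Proof.
rewrite /arrow_cocycle; case: eqP => [->|_]; last by rewrite mulmx0.
apply/matrixP => i j; rewrite unit_idem_mulE mxE eq_ix.
by case: (eqVneq (enum_val i) (inr a)) => [->|_]; rewrite ?eqxx ?mul1r ?mulr0.
Qed.

Lemma arrow_cocycle_tgt c : arrow_cocycle c *m ridem reg (t c) = arrow_cocycle c.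
Proof.
rewrite /arrow_cocycle; case: eqP => [->|_]; last by rewrite mul0mx.
apply/matrixP => i j; rewrite mul_unit_idemE mxE !eq_ix.
by case: (eqVneq (enum_val j) (inr a)) => [->|_]; rewrite ?eqxx ?mulr1 ?andbF ?mul0r.
Qed.

Lemma arrow_cocycle_rarr c d : arrow_cocycle c *m rarr reg d = 0.
Proof.
rewrite /arrow_cocycle; case: eqP => _; last by rewrite mul0mx.
by apply: mul_delta_mx_0; rewrite (inj_eq enum_rank_inj).
Qed.

Lemma rarr_arrow_cocycle c d : rarr dual c *m arrow_cocycle d = 0.
Proof.
rewrite /arrow_cocycle; case: eqP => _; last by rewrite mulmx0.
by apply: mul_delta_mx_0; rewrite (inj_eq enum_rank_inj).
Qed.

Lemma parallel_arrows_ext1_neq0 b : a != b -> s a = s b -> t a = t b ->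
  ~ ext1_zero dual reg.
Proof.
move=> ab sab tab.
case/(ext1_zero_coboundary arrow_cocycle_src arrow_cocycle_tgt arrow_cocycle_rarr
  rarr_arrow_cocycle) => h cobound.
have entry c i j : (rarr dual c *m h) i j = (h *m rarr reg c) i j + arrow_cocycle c i j.
  by rewrite cobound mxE.
have cocycle_b : arrow_cocycle b = 0 by rewrite /arrow_cocycle eq_sym (negbTE ab).
have ix_inr_eq c d : (ix (inr c) == ix (inr d)) = (c == d).
  by rewrite (inj_eq enum_rank_inj) (inj_eq inr_inj).
have h_ta_a : h (ix (inl (t a))) (ix (inr a)) = 0.
  have := entry b (ix (inr b)) (ix (inr a)).
  rewrite unit_arr_mulE mul_unit_arrE cocycle_b mxE !ix_inr_eq eqxx (negbTE ab).
  by rewrite mul1r mulr0 addr0 tab.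
have h_a_sa : h (ix (inr a)) (ix (inl (s a))) = 0.
  have := entry b (ix (inr a)) (ix (inr b)).
  rewrite unit_arr_mulE mul_unit_arrE cocycle_b mxE !ix_inr_eq eqxx (negbTE ab).
  by rewrite mul0r mulr1 addr0 sab => /esym.
have := entry a (ix (inr a)) (ix (inr a)).
rewrite unit_arr_mulE mul_unit_arrE /arrow_cocycle !eqxx mxE !eqxx mul1r mulr1.
by rewrite h_ta_a h_a_sa add0r => /eqP; rewrite eq_sym oner_eq0.
Qed.

End ParallelArrows.

Theorem lemma2p2 (k : fieldType) (Q0 Q1 : finType) (s t : Q1 -> Q0)
    (n : nat) (C : rmod k s t -> Prop) :
  quiver_connected s t -> (2 <= n)%N -> n_cluster_tilting n C ->
  forall (v u : Q0) (a b : Q1),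
    s a = v -> t a = u -> s b = v -> t b = u -> a = b.
Proof.
move=> _ n_ge2 C_cluster_tilting v u a b <- <- sba tba.
case: (eqVneq a b) => // ab; exfalso.
apply: (parallel_arrows_ext1_neq0 ab (esym sba) (esym tba)).
exact: cluster_tilting_ext1_zero n_ge2 C_cluster_tilting
  (@reg_projective k _ _ s t) (@dual_injective k _ _ s t).
Qed.
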